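(* Let $n \ge 2$ and let $\lambda = (n-1, n-2, \ldots, 2, 1)$. Then the moment variety $\mathcal{M}_{n,\lambda}$ is the projective toric variety of the Birkhoff polytope $B_n$. Under the identification of the coordinate $m_{i_1 i_2 \cdots i_n}$ (where $(i_1,\ldots,i_n)$ is a permutation of $\{0,1,\ldots,n-1\}$) with the $n\times n$ permutation matrix having a $1$ in position $(k, i_k+1)$ for each $k$, this variety lives in $\mathbb{P}^{n!-1}$, and it has dimension $(n-1)^2$.
   Context: Work over $\mathbb{C}$. For a partition $\lambda$ of $d$ with at most $n$ parts, let $N_\lambda$ be the set of vectors $(i_1,\ldots,i_n) \in \mathbb{Z}_{\ge 0}^n$ whose multiset of nonzero entries equals $\lambda$. The moment variety $\mathcal{M}_{n,\lambda} \subset \mathbb{P}^{|N_\lambda|-1}$, with coordinates $m_{i_1\cdots i_n}$ for $(i_1,\ldots,i_n)\in N_\lambda$, is the Zariski closure of the image of the monomial map $$(\mu_{ki})_{k\in[n],\, i\in[d]} \mapsto \bigl(\mu_{1 i_1}\mu_{2 i_2}\cdots \mu_{n i_n}\bigr)_{(i_1,\ldots,i_n)\in N_\lambda},$$ with the convention $\mu_{k0}=1$. The Birkhoff polytope $B_n$ is the convex hull of the $n!$ permutation matrices of size $n\times n$. The toric variety of $B_n$ is the Zariski closure of the image of the monomial map $t=(t_{ab}) \mapsto (t^{P})_{P}$, where $P$ ranges over the permutation matrices and $t^P=\prod_{a,b} t_{ab}^{P_{ab}}$. *)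

From HB Require Import structures.
From mathcomp Require Import all_boot all_algebra all_fingroup.
From mathcomp Require Import mpoly.

Set Implicit Arguments.
Unset Strict Implicit.
Unset Printing Implicit Defensive.
Import GRing.Theory.
Local Open Scope ring_scope.

(* Points of the affine space C^T are functions T -> C; polynomials in the
   coordinates are mpolys in #|T| variables, variable i standing for the
   coordinate (enum_val i). *)

Definition vanish (C : fieldType) (T : finType) (p : {mpoly C[#|T|]}) (x : T -> C) : Prop :=
  p.@[fun i => x (enum_val i)] = 0.

Definition zariski_closure (C : fieldType) (T : finType) (S : (T -> C) -> Prop) :
  (T -> C) -> Prop :=
  fun x => forall p : {mpoly C[#|T|]}, (forall y, S y -> vanish p y) -> vanish p x.

Definition image_of (C : fieldType) (T : finType) (P : Type) (f : P -> T -> C) :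
  (T -> C) -> Prop :=
  fun x => exists p : P, forall i, x i = f p i.

Definition alg_indep_coords (C : fieldType) (T : finType) (X : (T -> C) -> Prop)
  (k : nat) (s : 'I_k -> T) : Prop :=
  forall q : {mpoly C[k]}, (forall x, X x -> q.@[fun j => x (s j)] = 0) -> q = 0.

(* Dimension of an affine variety X in C^T: the maximal number of
   algebraically independent coordinate functions on X
   (= transcendence degree of the coordinate ring = Krull dimension). *)
Definition affine_dim (C : fieldType) (T : finType) (X : (T -> C) -> Prop) (d : nat) : Prop :=
  (exists s : 'I_d -> T, alg_indep_coords X s) /\
  (forall k (s : 'I_k -> T), alg_indep_coords X s -> (k <= d)%N).

(* Dimension of the projective variety whose affine cone is X. *)
Definition proj_dim (C : fieldType) (T : finType) (X : (T -> C) -> Prop) (d : nat) : Prop :=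
  affine_dim X d.+1.

(* N_lambda : vectors (i_1..i_n) of naturals whose multiset of nonzero entries
   is lambda; entries are then bounded by d = |lambda|, so we take them in
   'I_(d+1). *)
Definition Nlam (n : nat) (lam : seq nat) : pred {ffun 'I_n -> 'I_(sumn lam).+1} :=
  fun v => perm_eq [seq (val (v k)) | k <- enum 'I_n & (val (v k) != 0%N)] lam.

Definition Ncoord (n : nat) (lam : seq nat) : finType :=
  {v : {ffun 'I_n -> 'I_(sumn lam).+1} | @Nlam n lam v}.

Definition Nentry (n : nat) (lam : seq nat) (v : Ncoord n lam) (k : 'I_n) : nat :=
  val (val v k).

(* The monomial parametrization; mu k i is mu_{k i} (only i in [d] is used),
   with the convention mu_{k 0} = 1. *)
Definition moment_param (C : fieldType) (n : nat) (lam : seq nat)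
  (mu : 'I_n -> nat -> C) : Ncoord n lam -> C :=
  fun v => \prod_(k < n) (if Nentry v k == 0%N then 1 else mu k (Nentry v k)).

(* Affine cone of M_{n,lambda} in C^{N_lambda}. *)
Definition moment_variety (C : fieldType) (n : nat) (lam : seq nat) :
  (Ncoord n lam -> C) -> Prop :=
  zariski_closure (image_of (@moment_param C n lam)).

(* Coordinates are indexed by permutation matrices, i.e. by sigma : 'S_n, the
   matrix P_sigma having entry (a,b) equal to (sigma a == b). *)
Definition birkhoff_param (C : fieldType) (n : nat) (t : 'I_n -> 'I_n -> C) :
  'S_n -> C :=
  fun s => \prod_(a < n) \prod_(b < n) t a b ^+ (s a == b).

(* Affine cone of the toric variety of B_n in C^{S_n}. *)
Definition birkhoff_toric (C : fieldType) (n : nat) : ('S_n -> C) -> Prop :=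
  zariski_closure (image_of (@birkhoff_param C n)).

Definition staircase (n : nat) : seq nat := rev (iota 1 n.-1).

From mathcomp Require Import all_boot all_algebra all_fingroup.
From mathcomp Require Import mpoly.

(** Relabel the coordinate m_(i_1 ... i_n) of the staircase moment variety by
   the permutation k |-> i_k.  The moment map then becomes the Birkhoff monomial
   map t |-> (prod_a t_(a, s a))_s restricted to matrices whose first column is 1,
   and on the torus every Birkhoff point is of this form after rescaling the rows
   and one column; since the torus is Zariski dense (char 0), the two closures
   coincide.  For the dimension: the identity and the (n-1)^2 cycles
   0 -> a -> b -> 0 give (n-1)^2 + 1 coordinates whose values on the moment image
   can be prescribed arbitrarily on the torus, hence are algebraically
   independent; conversely any (n-1)^2 + 2 permutation matrices are linearly
   dependent, and an integral dependency is a binomial relation among the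
   corresponding coordinates. *)

Set Implicit Arguments.
Unset Strict Implicit.
Unset Printing Implicit Defensive.
Import GRing.Theory.
Local Open Scope ring_scope.

Section PolynomialIdentity.
Variable C : fieldType.
Hypothesis C_pchar0 : [pchar C] =i pred0.

Lemma natr_inj_pchar0 : injective (fun i : nat => i%:R : C).
Proof.
move=> i j /= eq_ij; wlog le_ji : i j eq_ij / (j <= i)%N.
  by move=> W; case: (leqP j i) => [|/ltnW] le; [apply: W | apply/esym/W].
apply/eqP; rewrite eqn_leq le_ji andbT -subn_eq0.
by rewrite -(pcharf0P C).1 // natrB // eq_ij subrr.
Qed.

Lemma poly_eq0_of_horner0 (p : {poly C}) : (forall x, p.[x] = 0) -> p = 0.
Proof.
move=> p0; apply: (@roots_geq_poly_eq0 _ _ [seq i%:R | i <- iota 0 (size p)]).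
- by apply/allP => _ /mapP[i _ ->]; apply/rootP.
- by rewrite map_inj_uniq ?iota_uniq //; apply: natr_inj_pchar0.
- by rewrite size_map size_iota.
Qed.

Section LastVariable.
Variable k : nat.

Definition mnm_init (m : 'X_{1..k.+1}) : 'X_{1..k} :=
  [multinom m (widen_ord (leqnSn k) i) | i < k].

Lemma widen_lift_max (i : 'I_k) : widen_ord (leqnSn k) i = lift ord_max i.
Proof. exact/val_inj/esym/lift_max. Qed.

Lemma mnm_init_inj (m1 m2 : 'X_{1..k.+1}) :
  m1 ord_max = m2 ord_max -> mnm_init m1 = mnm_init m2 -> m1 = m2.
Proof.
move=> eq_max /mnmP eq_init; apply/mnmP => i.
case: (unliftP ord_max i) => [j ->|-> //].
by have := eq_init j; rewrite !mnmE widen_lift_max.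
Qed.

Definition mcoeff_last (q : {mpoly C[k.+1]}) (j : nat) : {mpoly C[k]} :=
  \sum_(m <- msupp q | m ord_max == j) q@_m *: 'X_[mnm_init m].

Lemma mcoeff_mcoeff_last q m :
  (mcoeff_last q (m ord_max))@_(mnm_init m) = q@_m.
Proof.
rewrite /mcoeff_last raddf_sum /=.
under eq_bigr => m' _ do rewrite mcoeffZ mcoeffX mulr_natr mulrb.
rewrite -big_mkcondr /=.
rewrite (eq_bigl (fun m' => m' == m)) => [|m'] /=; last first.
  by apply/andP/eqP => [[/eqP eq_max /eqP]|->]; [apply: mnm_init_inj | split].
have [qm|qNm] := boolP (m \in msupp q).
  by rewrite -big_filter (filter_pred1_uniq (msupp_uniq q) qm) big_seq1.
rewrite (memN_msupp_eq0 qNm) big1_seq // => m' /andP[/eqP -> qm].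
by rewrite qm in qNm.
Qed.

Definition extend_last (v : 'I_k -> C) (x : C) (i : 'I_k.+1) : C :=
  if unlift ord_max i is Some j then v j else x.

Lemma meval_extend_last q v x (d : nat) :
  (forall m, m \in msupp q -> (m ord_max < d)%N) ->
  q.@[extend_last v x] = (\poly_(j < d) (mcoeff_last q j).@[v]).[x].
Proof.
move=> lt_d; rewrite horner_poly mevalE.
under [RHS]eq_bigr => j _.
  rewrite /mcoeff_last rmorph_sum big_distrl /=.
  over.
rewrite (exchange_big_dep xpredT) //=; apply: eq_big_seq => m qm.
rewrite (bigD1 (Ordinal (lt_d m qm))) //= [X in _ + X]big1 ?addr0; last first.
  by move=> j /andP[/eqP eq_j]; rewrite -val_eqE /= eq_j eqxx.
rewrite mevalZ mevalX big_ord_recr /= -mulrA; congr (_ * (_ * _)).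
  by apply: eq_bigr => i _; rewrite mnmE /extend_last widen_lift_max liftK.
by rewrite /extend_last unlift_none.
Qed.

End LastVariable.

Lemma mpoly_eq0_of_meval0 k (q : {mpoly C[k]}) : (forall v, q.@[v] = 0) -> q = 0.
Proof.
elim: k q => [|k IHk] q q0.
  by have := q0 (fun _ => 0); rewrite [q]nvar0_mpolyC mevalC => ->.
pose d := (\max_(m <- msupp q) (m ord_max).+1)%N.
have lt_d m : m \in msupp q -> (m ord_max < d)%N.
  move=> qm.
  by apply: (@leq_bigmax_seq _ _ xpredT (fun m : 'X_{1..k.+1} => (m ord_max).+1)).
have last0 j : (j < d)%N -> mcoeff_last q j = 0.
  move=> lt_jd; apply: IHk => v.
  have horner0 x : (\poly_(j < d) (mcoeff_last q j).@[v]).[x] = 0.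
    by rewrite -meval_extend_last.
  have /(congr1 (fun p : {poly C} => p`_j)) := poly_eq0_of_horner0 horner0.
  by rewrite coef_poly lt_jd coef0.
apply/mpolyP => m; rewrite mcoeff0.
have [/lt_d/last0 m_last0|/memN_msupp_eq0 //] := boolP (m \in msupp q).
by rewrite -mcoeff_mcoeff_last m_last0 mcoeff0.
Qed.

Lemma mpoly_eq0_of_meval0_torus k (q : {mpoly C[k]}) :
  (forall v, (forall i, v i != 0) -> q.@[v] = 0) -> q = 0.
Proof.
move=> q0; have : q * \prod_(i < k) 'X_i = 0.
  apply: mpoly_eq0_of_meval0 => v; rewrite mevalM rmorph_prod /=.
  have [/forallP v_nz|] := boolP [forall i, v i != 0]; first by rewrite q0 ?mul0r.
  rewrite negb_forall => /existsP[i /negPn/eqP vi0].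
  by rewrite (bigD1 i) //= mevalXU vi0 mul0r mulr0.
move/eqP; rewrite mulf_eq0 => /orP[/eqP // |].
rewrite prodf_seq_eq0 => /hasP[i _ /andP[_ /eqP /(congr1 (mcoeff U_(i)%MM))]].
by rewrite mcoeffX mcoeff0 eqxx => /eqP; rewrite oner_eq0.
Qed.

End PolynomialIdentity.

Section ZariskiClosure.
Variables (C : fieldType) (T : finType).
Implicit Types (S : (T -> C) -> Prop) (x : T -> C).

Lemma zariski_closure_sub S x : S x -> zariski_closure S x.
Proof. by move=> Sx p; apply. Qed.

Lemma zariski_closure_ext S x1 x2 :
  x1 =1 x2 -> zariski_closure S x1 -> zariski_closure S x2.
Proof. by move=> eq_x Sx1 p /Sx1; rewrite /vanish (meval_eq _ (fun i => eq_x _)). Qed.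

Definition mpoly_relabel k (s : 'I_k -> T) (q : {mpoly C[k]}) : {mpoly C[#|T|]} :=
  q \mPo [tuple 'X_(enum_rank (s j)) | j < k].

Lemma meval_relabel k (s : 'I_k -> T) q x :
  (mpoly_relabel s q).@[fun i => x (enum_val i)] = q.@[x \o s].
Proof.
rewrite comp_mpoly_meval; apply: meval_eq => j.
by rewrite tnth_mktuple mevalXU enum_rankK.
Qed.

Lemma zariski_closure_relation S k (s : 'I_k -> T) (q : {mpoly C[k]}) :
  (forall x, S x -> q.@[x \o s] = 0) ->
  forall x, zariski_closure S x -> q.@[x \o s] = 0.
Proof.
move=> q0 x Sx; rewrite -meval_relabel; apply: Sx => y Sy.
by rewrite /vanish meval_relabel q0.
Qed.

Lemma alg_indep_coords_closure S k (s : 'I_k -> T) :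
  alg_indep_coords (zariski_closure S) s <-> alg_indep_coords S s.
Proof.
split=> indep q q0; apply: indep => x Sx.
  exact: zariski_closure_relation Sx.
exact: q0 (zariski_closure_sub Sx).
Qed.

Lemma zariski_closure_comap (T' : finType) (phi : T' -> T) S
    (S' : (T' -> C) -> Prop) :
  (forall x, S x -> zariski_closure S' (x \o phi)) ->
  forall x, zariski_closure S x -> zariski_closure S' (x \o phi).
Proof.
move=> SS' x Sx p p0.
apply: (zariski_closure_relation (s := phi \o enum_val)) Sx => y Sy.
exact: SS' Sy p p0.
Qed.

Hypothesis C_pchar0 : [pchar C] =i pred0.

Lemma alg_indep_coords_of_torus_image S k (s : 'I_k -> T) :
  (forall w : 'I_k -> C, (forall j, w j != 0) -> exists2 x, S x & x \o s =1 w) ->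
  alg_indep_coords S s.
Proof.
move=> onto q q0; apply: (mpoly_eq0_of_meval0_torus C_pchar0) => w w_nz.
have [x Sx eq_w] := onto w w_nz.
by rewrite -(q0 x Sx); apply: meval_eq => j; rewrite -eq_w.
Qed.

(* Zariski density of the torus. *)
Lemma zariski_closure_mpoly_image S k (F : T -> {mpoly C[k]}) :
  (forall w, (forall j, w j != 0) -> zariski_closure S (fun t => (F t).@[w])) ->
  forall w, zariski_closure S (fun t => (F t).@[w]).
Proof.
move=> torusF w p p0; pose P := p \mPo [tuple F (enum_val i) | i < #|T|].
have PE w' : P.@[w'] = p.@[fun i => (F (enum_val i)).@[w']].
  by rewrite comp_mpoly_meval; apply: meval_eq => i; rewrite tnth_mktuple.
have P0 : P = 0.
  apply: (mpoly_eq0_of_meval0_torus C_pchar0) => w' /torusF/(_ p p0).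
  by rewrite PE.
by have := PE w; rewrite P0 meval0 => /esym.
Qed.

End ZariskiClosure.

Section BinomialRelations.
Variables (R : comNzRingType) (I : finType) (k : nat).

Lemma prod_monomials_exp (w : I -> R) (e : 'I_k -> I -> nat) (p : 'I_k -> nat) :
  \prod_j (\prod_i w i ^+ e j i) ^+ p j = \prod_i w i ^+ (\sum_j p j * e j i)%N.
Proof.
under eq_bigr => j _ do rewrite -prodrXl.
rewrite exchange_big; apply: eq_bigr => i _.
under eq_bigr => j _ do rewrite -exprM mulnC.
by rewrite prodrXr.
Qed.

Lemma meval_binomial_monomials (e : 'I_k -> I -> nat) (p q : 'X_{1..k}) w :
  (forall i, \sum_j p j * e j i = \sum_j q j * e j i)%N ->
  ('X_[p] - 'X_[q] : {mpoly R[k]}).@[fun j => \prod_i w i ^+ e j i] = 0.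
Proof.
move=> eq_pq; rewrite mevalB !mevalX !prod_monomials_exp.
by under eq_bigr => i _ do rewrite eq_pq; rewrite subrr.
Qed.

Lemma binomial_neq0 (p q : 'X_{1..k}) : p != q -> 'X_[p] - 'X_[q] != 0 :> {mpoly R[k]}.
Proof.
move=> ne_pq; apply/eqP => /(congr1 (mcoeff p)).
rewrite mcoeffB !mcoeffX eqxx eq_sym (negbTE ne_pq) subr0 mcoeff0.
by move/eqP; rewrite oner_eq0.
Qed.

End BinomialRelations.

Lemma exists_int_left_kernel k r (A : 'M[rat]_(k, r)) : (r < k)%N ->
  exists2 c : 'I_k -> int, (exists j, c j != 0) &
    forall col, \sum_j (c j)%:~R * A j col = 0.
Proof.
move=> lt_rk; have : kermx A != 0.
  by rewrite kermx_eq0 /row_free ltn_eqF // (leq_ltn_trans (rank_leq_col A)).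
case/rowV0Pn => u /sub_kermxP uA0 u_nz.
pose d : rat := \prod_j (denq (u 0 j))%:~R.
pose c j := numq (u 0 j) * \prod_(i | i != j) denq (u 0 i).
have cE j : (c j)%:~R = u 0 j * d.
  by rewrite /c intrM numqE rmorph_prod /d [in RHS](bigD1 j) //= mulrA.
have d_nz : d != 0 by apply/prodf_neq0 => j _; rewrite intr_eq0 denq_neq0.
exists c.
  have /existsP[j uj_nz] : [exists j, u 0 j != 0].
    apply: contraR u_nz => /existsPn u0.
    by apply/eqP/rowP => j; rewrite mxE; apply/eqP/negPn.
  by exists j; rewrite -(intr_eq0 rat) cE mulf_neq0.
move=> col; have /rowP/(_ col) := uA0; rewrite !mxE => uA0col.
by under eq_bigr => j _ do rewrite cE mulrAC; rewrite -mulr_suml uA0col mul0r.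
Qed.

Lemma line_sums0_eq0 (V : zmodType) n (M : 'I_n.+1 -> 'I_n.+1 -> V) :
  (forall a, \sum_b M a b = 0) -> (forall b, \sum_a M a b = 0) ->
  (forall a b, M (lift ord0 a) (lift ord0 b) = 0) -> forall a b, M a b = 0.
Proof.
move=> row0 col0 block0.
have row00 b : M ord0 (lift ord0 b) = 0.
  by have := col0 (lift ord0 b); rewrite big_ord_recl big1 ?addr0.
have col00 a : M (lift ord0 a) ord0 = 0.
  by have := row0 (lift ord0 a); rewrite big_ord_recl big1 ?addr0.
have M00 : M ord0 ord0 = 0.
  by have := row0 ord0; rewrite big_ord_recl big1 ?addr0.
by move=> a b; case: (unliftP ord0 a) => [a' ->|->]; case: (unliftP ord0 b) => [b' ->|->].
Qed.

Section PermutationMatrices.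
Variable n : nat.

Lemma perm_mx_row_sum (R : nzSemiRingType) (s : 'S_n) a :
  \sum_b ((s a == b) : nat)%:R = 1 :> R.
Proof.
by rewrite (bigD1 (s a)) //= eqxx big1 ?addr0 // => b /negbTE; rewrite eq_sym => ->.
Qed.

Lemma perm_mx_col_sum (R : nzSemiRingType) (s : 'S_n) b :
  \sum_a ((s a == b) : nat)%:R = 1 :> R.
Proof.
rewrite (bigD1 (s^-1 b)%g) //= permKV eqxx big1 ?addr0 // => a ne_a.
by case: eqP => // sab; rewrite -sab permK eqxx in ne_a.
Qed.

End PermutationMatrices.

Lemma int_pos_neg_parts k (c : 'I_k -> int) :
  exists p q : 'X_{1..k}, forall j, c j = (p j)%:Z - (q j)%:Z.
Proof.
exists [multinom (if c j is Posz m then m else 0%N) | j < k].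
exists [multinom (if c j is Negz m then m.+1 else 0%N) | j < k].
by move=> j; rewrite !mnmE; case: (c j) => m; rewrite ?subr0 ?NegzE ?sub0r.
Qed.

(* The span of the permutation matrices of size n+1 has dimension n^2 + 1: a
   combination of them is determined by its coefficient sum and its lower-right
   n x n block, the first row and column being recovered from the line sums. *)
Lemma perm_mx_dependent n k (s : 'I_k -> 'S_n.+1) : ((n ^ 2).+1 < k)%N ->
  exists p q : 'X_{1..k}, p != q /\
    forall a b, (\sum_j p j * (s j a == b))%N = (\sum_j q j * (s j a == b))%N.
Proof.
move=> lt_k; pose e j a b : int := ((s j a == b) : nat)%:R.
pose A : 'M[rat]_(k, 1 + n * n) := \matrix_(j < k)
  row_mx 1 (mxvec (\matrix_(a, b) (e j (lift ord0 a) (lift ord0 b))%:~R)).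
have lt_cols : (1 + n * n < k)%N by rewrite add1n mulnn.
have [c [j0 cj0_nz] cA0] := exists_int_left_kernel A lt_cols.
have cA0_int col (f : 'I_k -> int) :
    (forall j, A j col = (f j)%:~R) -> \sum_j c j * f j = 0.
  move=> Af; apply/eqP; rewrite -(intr_eq0 rat) rmorph_sum /=.
  by under eq_bigr => j _ do rewrite intrM -Af; apply/eqP/cA0.
have sum_c : \sum_j c j = 0.
  under eq_bigr => j _ do rewrite -[c j]mulr1.
  by apply: (cA0_int (lshift _ ord0)) => j; rewrite mxE row_mxEl mxE.
have M0 : forall a b, \sum_j c j * e j a b = 0.
  apply: line_sums0_eq0 => [a|b|a b].
  - rewrite exchange_big /=.
    by under eq_bigr => j _ do rewrite -mulr_sumr perm_mx_row_sum mulr1.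
  - rewrite exchange_big /=.
    by under eq_bigr => j _ do rewrite -mulr_sumr perm_mx_col_sum mulr1.
  apply: (cA0_int (rshift 1 (mxvec_index a b))) => j.
  by rewrite mxE row_mxEr mxvecE mxE.
have [p [q cE]] := int_pos_neg_parts c.
exists p, q; split.
  by apply: contraNneq cj0_nz => eq_pq; rewrite cE eq_pq subrr.
move=> a b; apply/eqP; rewrite -eqz_nat -subr_eq0 -(M0 a b).
rewrite !(big_morph Posz PoszD erefl) -sumrB.
by apply/eqP/eq_bigr => j _; rewrite !PoszM -mulrBl -cE /e natz.
Qed.

Section StaircaseCoordinates.
Variable n : nat.
Local Notation lam := (staircase n).
Local Notation coord := (Ncoord n lam).
Implicit Types (v : coord) (s : 'S_n) (k : 'I_n).

Lemma mem_staircase x : (x \in lam) = (0 < x < n)%N.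
Proof.
rewrite mem_rev mem_iota add1n; case: n => [|n'] //=.
by rewrite ltnS leqn0 lt0n andNb ltn0 andbF.
Qed.

Lemma size_staircase : size lam = n.-1.
Proof. by rewrite size_rev size_iota. Qed.

Lemma uniq_staircase : uniq lam.
Proof. by rewrite rev_uniq iota_uniq. Qed.

Lemma leq_sumn_staircase : (n <= (sumn lam).+1)%N.
Proof.
apply: (leq_trans (leqSpred n)); rewrite ltnS -size_staircase -sum1_size sumnE.
rewrite big_seq_cond [leqRHS]big_seq_cond; apply: leq_sum => x.
by rewrite andbT mem_staircase => /andP[].
Qed.

Definition staircase_vec (s : 'S_n) : {ffun 'I_n -> 'I_(sumn lam).+1} :=
  [ffun k => widen_ord leq_sumn_staircase (s k)].

Lemma Nlam_staircase_vec s : Nlam (staircase_vec s).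
Proof.
apply: uniq_perm; last 1 first.
- move=> x; rewrite mem_staircase; apply/mapP/idP => [[k]|/andP[x_gt0 lt_xn]].
    rewrite mem_filter ffunE => /andP[x_nz _] ->.
    by rewrite lt0n x_nz; exact: ltn_ord (s k).
  exists (s^-1 (Ordinal lt_xn))%g; last by rewrite ffunE /= permKV.
  by rewrite mem_filter mem_enum ffunE /= permKV -lt0n x_gt0.
- rewrite map_inj_in_uniq; first by apply: filter_uniq; apply: enum_uniq.
  by move=> k1 k2 _ _; rewrite !ffunE /= => /val_inj/perm_inj.
exact: uniq_staircase.
Qed.

Definition staircase_coord (s : 'S_n) : coord :=
  exist _ (staircase_vec s) (Nlam_staircase_vec s).

Lemma Nentry_staircase_coord s k : Nentry (staircase_coord s) k = s k.
Proof. by rewrite /Nentry ffunE. Qed.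

Lemma Nentry_lt v k : (Nentry v k < n)%N.
Proof.
have [->|nz] := eqVneq (Nentry v k) 0%N; first exact: leq_ltn_trans (ltn_ord k).
have : Nentry v k \in lam.
  by rewrite -(perm_mem (valP v)); apply: map_f; rewrite mem_filter mem_enum nz.
by rewrite mem_staircase => /andP[].
Qed.

Definition coord_entry v k : 'I_n := Ordinal (Nentry_lt v k).

(* The nonzero entries of [v] take each value 1, ..., n-1, and there are only
   n-1 of them, so some entry is 0. *)
Lemma coord_entry_onto v i : exists k, coord_entry v k = i.
Proof.
suff [k eq_ki] : exists k, Nentry v k = i by exists k; apply: val_inj.
have [i0|i_gt0] := posnP i; last first.
  have : val i \in lam by rewrite mem_staircase i_gt0 ltn_ord.
  by rewrite -(perm_mem (valP v)) => /mapP[k _ ->]; exists k.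
have : [exists k, Nentry v k == 0%N].
  apply: contraT; rewrite negb_exists => /forallP entries_nz.
  have := perm_size (valP v); rewrite size_map size_filter size_staircase.
  have /eqP -> : count (fun k => Nentry v k != 0%N) (enum 'I_n) == size (enum 'I_n).
    by rewrite -all_count; apply/allP => k _; exact: entries_nz.
  rewrite size_enum_ord => /eqP; rewrite eqn_leq => /andP[+ _].
  by rewrite leqNgt ltn_predL -i0 ltn_ord.
by case/existsP => k /eqP; rewrite i0; exists k.
Qed.

Lemma coord_entry_inj v : injective (coord_entry v).
Proof.
have : #|codom (coord_entry v)| == #|'I_n|.
  apply/eqP/eq_card => i; rewrite inE; apply/codomP.
  by have [k <-] := coord_entry_onto v i; exists k.
by move/image_injP => inj_f k1 k2; apply: inj_f.
Qed.

Definition perm_of_coord v : 'S_n := perm (@coord_entry_inj v).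

Lemma perm_of_coordE v k : perm_of_coord v k = Nentry v k :> nat.
Proof. by rewrite permE. Qed.

Lemma staircase_coordK : cancel staircase_coord perm_of_coord.
Proof.
move=> s; apply/permP => k; apply/val_inj.
by rewrite /= perm_of_coordE Nentry_staircase_coord.
Qed.

Lemma perm_of_coordK : cancel perm_of_coord staircase_coord.
Proof.
move=> v; apply/val_inj/ffunP => k; apply/val_inj.
by rewrite ffunE /= perm_of_coordE.
Qed.

Lemma card_staircase_coord : #|coord| = n`!.
Proof.
rewrite -card_Sn; apply: (bij_eq_card (f := perm_of_coord)).
exact: Bijective perm_of_coordK staircase_coordK.
Qed.

End StaircaseCoordinates.

Lemma prod_perm_cycle (R : comNzRingType) (T : finType) (M : T -> T -> R) (x0 a b : T) :
  (forall x, M x x = 1) -> a != x0 -> b != x0 ->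
  \prod_x M x ((tperm a b * tperm x0 a)%g x) = M x0 a * M a b * M b x0.
Proof.
move=> M1 a_nx0 b_nx0; have [<-|a_nb] := eqVneq a b.
  rewrite tperm1 mul1g M1 mulr1 (bigD1 x0) //= (bigD1 a) //= tpermL tpermR.
  rewrite big1 ?mulr1 // => x /andP[x_nx0 x_na].
  by rewrite tpermD 1?eq_sym.
rewrite (bigD1 x0) //= (bigD1 a) //= (bigD1 b) /=; last by rewrite b_nx0 eq_sym.
rewrite !permM (tpermD a_nx0 b_nx0) !tpermL tpermR (tpermD _ a_nb) ?tpermR 1?eq_sym //.
rewrite big1 ?mulr1 ?mulrA // => x /andP[/andP[x_nx0 x_na] x_nb].
by rewrite permM !tpermD 1?eq_sym.
Qed.

Section BirkhoffParam.
Variables (C : fieldType) (n : nat).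
Implicit Types (t : 'I_n -> 'I_n -> C) (s : 'S_n).

Lemma birkhoff_paramE t s : birkhoff_param t s = \prod_a t a (s a).
Proof.
apply: eq_bigr => a _; rewrite (bigD1 (s a)) //= eqxx expr1 big1 ?mulr1 // => b.
by rewrite eq_sym => /negbTE ->.
Qed.

Lemma birkhoff_param_monomial t s :
  birkhoff_param t s = \prod_(ab : 'I_n * 'I_n) t ab.1 ab.2 ^+ (s ab.1 == ab.2).
Proof. exact: pair_big. Qed.

Lemma birkhoff_param_scale (r c : 'I_n -> C) t s :
  birkhoff_param (fun a b => r a * t a b * c b) s =
  \prod_a r a * birkhoff_param t s * \prod_b c b.
Proof.
rewrite !birkhoff_paramE !big_split /=; congr (_ * _).
by rewrite [RHS](reindex_inj (@perm_inj _ s)).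
Qed.

Definition birkhoff_mpoly s : {mpoly C[#|{: 'I_n * 'I_n}|]} :=
  \prod_a 'X_(enum_rank (a, s a)).

Lemma meval_birkhoff_mpoly w s :
  (birkhoff_mpoly s).@[w] = birkhoff_param (fun a b => w (enum_rank (a, b))) s.
Proof.
rewrite birkhoff_paramE /birkhoff_mpoly rmorph_prod.
by apply: eq_bigr => a _; rewrite /= mevalXU.
Qed.

End BirkhoffParam.

Section StaircaseMomentVariety.
Variables (C : fieldType) (m : nat).
Local Notation N := m.+2.
Local Notation lam := (staircase N).
Local Notation coord := (Ncoord N lam).

Definition moment_matrix (mu : 'I_N -> nat -> C) (a b : 'I_N) : C :=
  if val b == 0%N then 1 else mu a b.

Lemma moment_param_birkhoff mu v :
  moment_param mu v = birkhoff_param (moment_matrix mu) (perm_of_coord v).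
Proof.
rewrite /moment_param birkhoff_paramE; apply: eq_bigr => a _.
by rewrite /moment_matrix -perm_of_coordE.
Qed.

Lemma moment_param_of_birkhoff (t : 'I_N -> 'I_N -> C) :
  (forall a, t a ord0 = 1) ->
  forall v,
  moment_param (fun a i => t a (inord i)) v = birkhoff_param t (perm_of_coord v).
Proof.
move=> t_col0 v; rewrite moment_param_birkhoff !birkhoff_paramE.
apply: eq_bigr => a _; rewrite /moment_matrix inord_val.
case: eqP => // s_a0.
by rewrite (_ : perm_of_coord v a = ord0) ?t_col0 //; apply: val_inj.
Qed.

(* Normalize the first column of [t] to 1 by scaling the rows, and compensate
   the scalar factor by scaling a second column. *)
Lemma moment_param_of_birkhoff_torus (t : 'I_N -> 'I_N -> C) :
  (forall a, t a ord0 != 0) ->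
  exists mu, forall v, moment_param mu v = birkhoff_param t (perm_of_coord v).
Proof.
move=> t_col0; pose c := \prod_a t a ord0.
pose t' a b := (t a ord0)^-1 * t a b * (if b == ord_max then c else 1).
exists (fun a i => t' a (inord i)) => v; rewrite moment_param_of_birkhoff => [|a].
  rewrite birkhoff_param_scale -big_mkcond big_pred1_eq prodfV mulrAC.
  by rewrite mulVf ?mul1r //; apply/prodf_neq0.
by rewrite /t' mulVf // mul1r.
Qed.

Hypothesis C_pchar0 : [pchar C] =i pred0.

Lemma birkhoff_toric_moment_variety (y : 'S_N -> C) :
  birkhoff_toric y -> @moment_variety C N lam (y \o @perm_of_coord N).
Proof.
apply: zariski_closure_comap => z [t z_t].
pose w (i : 'I_#|{: 'I_N * 'I_N}|) := t (enum_val i).1 (enum_val i).2.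
apply: (zariski_closure_ext (x1 := fun v => (birkhoff_mpoly C (perm_of_coord v)).@[w])).
  move=> v; rewrite /= z_t meval_birkhoff_mpoly !birkhoff_paramE.
  by apply: eq_bigr => a _; rewrite /w enum_rankK.
apply: zariski_closure_mpoly_image => // w' w'_nz.
have [mu mu_t] := moment_param_of_birkhoff_torus
  (t := fun a b => w' (enum_rank (a, b))) (fun a => w'_nz _).
by apply: zariski_closure_sub; exists mu => v; rewrite mu_t meval_birkhoff_mpoly.
Qed.

Lemma moment_variety_birkhoff_toric (x : coord -> C) :
  moment_variety x <-> birkhoff_toric (x \o @staircase_coord N).
Proof.
split; last first.
  move/birkhoff_toric_moment_variety; apply: zariski_closure_ext => v.
  by rewrite /= perm_of_coordK.
apply: zariski_closure_comap => y [mu y_mu]; apply: zariski_closure_sub.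
exists (moment_matrix mu) => s.
by rewrite /= y_mu moment_param_birkhoff staircase_coordK.
Qed.

Definition basic_perm (o : option ('I_m.+1 * 'I_m.+1)) : 'S_N :=
  if o is Some (a, b) then (tperm (lift ord0 a) (lift ord0 b) * tperm ord0 (lift ord0 a))%g
  else 1%g.

(* The basic permutations are the identity and the cycles 0 -> a -> b -> 0: each
   of their monomials involves an entry [t a b] not involved in the previous
   ones, so the moment map onto these coordinates can be inverted. *)
Lemma moment_param_basic_perm_onto (Y : option ('I_m.+1 * 'I_m.+1) -> C) :
  (forall o, Y o != 0) ->
  exists mu, forall o, moment_param mu (staircase_coord (basic_perm o)) = Y o.
Proof.
move=> Y_nz; pose D := Y None.
pose t0 (x y : 'I_N) := match unlift ord0 x, unlift ord0 y with
  | _, None => 1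
  | None, Some b => Y (Some (b, b)) / D
  | Some a, Some b => Y (Some (a, b)) / Y (Some (a, a)) end.
have t0_diag x : t0 x x = 1.
  by rewrite /t0; case: (unliftP ord0 x) => [a _|_]; rewrite ?divff.
pose t x y := 1 * t0 x y * (if y == ord_max then D else 1).
exists (fun a i => t a (inord i)) => o.
rewrite moment_param_of_birkhoff ?staircase_coordK => [|a]; last first.
  by rewrite /t /t0 unlift_none; case: unlift => [_|] /=; rewrite !mul1r.
rewrite birkhoff_param_scale big1_eq mul1r -big_mkcond big_pred1_eq birkhoff_paramE.
case: o => [[a b]|] /=; last by rewrite big1 ?mul1r // => x _; rewrite perm1.
rewrite prod_perm_cycle // /t0 !liftK unlift_none.
by rewrite mulr1 mulrAC divfK ?Y_nz // mulrC divfK.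
Qed.

Lemma card_basic_index : #|{: option ('I_m.+1 * 'I_m.+1)}| = (m.+1 ^ 2).+1.
Proof. by rewrite card_option card_prod card_ord mulnn. Qed.

Definition basic_coord (j : 'I_(m.+1 ^ 2).+1) : coord :=
  staircase_coord (basic_perm (enum_val (cast_ord (esym card_basic_index) j))).

Lemma alg_indep_basic_coords : alg_indep_coords (@moment_variety C N lam) basic_coord.
Proof.
apply/alg_indep_coords_closure/alg_indep_coords_of_torus_image => // w w_nz.
pose Y o := w (cast_ord card_basic_index (enum_rank o)).
have [mu mu_Y] := moment_param_basic_perm_onto (fun o => w_nz _ : Y o != 0).
exists (moment_param mu); first by exists mu.
by move=> j; rewrite /= mu_Y /Y enum_valK cast_ordKV.
Qed.

Lemma alg_indep_moment_coords_le k (s : 'I_k -> coord) :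
  alg_indep_coords (@moment_variety C N lam) s -> (k <= (m.+1 ^ 2).+1)%N.
Proof.
move/alg_indep_coords_closure => indep; rewrite leqNgt; apply/negP => lt_k.
have [p [q [ne_pq rel]]] := perm_mx_dependent (fun j => perm_of_coord (s j)) lt_k.
apply: (negP (binomial_neq0 C ne_pq)); apply/eqP/indep => x [mu x_mu].
under meval_eq => j do rewrite /= x_mu moment_param_birkhoff birkhoff_param_monomial.
by apply: meval_binomial_monomials => -[a b]; apply: rel.
Qed.

End StaircaseMomentVariety.

Unset Implicit Arguments.

Theorem proposition2p4 (C : closedFieldType) (hC : [pchar C]%R =i pred0)
  (n : nat) (hn : (2 <= n)%N) :
  let lam := staircase n in
  (* the coordinates of M_{n,lam} are exactly the permutations of {0,..,n-1} *)
  (forall s : 'S_n, exists v : Ncoord n lam, forall k, Nentry v k = s k) /\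
  (forall v : Ncoord n lam, exists! s : 'S_n, forall k, Nentry v k = s k) /\
  (* hence the ambient space is P^{n!-1} *)
  #|Ncoord n lam| = n`! /\
  (* under m_{i_1..i_n} <-> permutation matrix with 1 in position (k, i_k+1),
     M_{n,lam} is the toric variety of B_n *)
  (forall (x : Ncoord n lam -> C) (y : 'S_n -> C),
     (forall (s : 'S_n) (v : Ncoord n lam), (forall k, Nentry v k = s k) -> y s = x v) ->
     (moment_variety x <-> birkhoff_toric y)) /\
  (* and it has (projective) dimension (n-1)^2 *)
  proj_dim (@moment_variety C n lam) ((n - 1) ^ 2).
Proof.
case: n hn => [|[|m]] // _ lam.
split; first by move=> s; exists (staircase_coord s) => k; rewrite Nentry_staircase_coord.
split.
  move=> v; exists (perm_of_coord v); split=> [k|s eq_s]; first exact/esym/perm_of_coordE.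
  by apply/permP => k; apply/val_inj; rewrite /= perm_of_coordE eq_s.
split; first exact: card_staircase_coord.
split.
  move=> x y xy; have y_x : x \o @staircase_coord _ =1 y.
    move=> s; rewrite (xy s (staircase_coord s)) // => k.
    exact: Nentry_staircase_coord.
  rewrite moment_variety_birkhoff_toric //.
  by split; apply: zariski_closure_ext => // s; rewrite y_x.
rewrite /proj_dim subn1; split; last exact: alg_indep_moment_coords_le.
by exists (@basic_coord m); apply: alg_indep_basic_coords.
Qed.
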